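(* In the setting described in the context, for all $\alpha,\beta\in(0,\infty)$ with $\alpha>\beta$ and all $t\ge0$: if $L^{(\alpha)}_{t\infty}>0$ then $L^{(\beta)}_{t\infty}=\infty$, whereas if $L^{(\beta)}_{t\infty}<\infty$ then $L^{(\alpha)}_{t\infty}=0$.
   Context: Let $(\Omega,\mathcal F,\mathbb P)$ be a probability space with a filtration $\{\mathcal F_t\}_{t\ge0}$ satisfying the usual conditions; (in)equalities between random variables hold a.s. A pricing kernel is an $\{\mathcal F_t\}$-adapted càdlàg semimartingale $\{\pi_t\}_{t\ge0}$ with (a) $\pi_t>0$, (b) $\mathbb E[\pi_t]<\infty$ for all $t\ge0$, (c) $\liminf_{t\to\infty}\mathbb E[\pi_t]=0$. Fix such a pricing kernel and set $P_{tT}=\pi_t^{-1}\mathbb E[\pi_T\mid\mathcal F_t]$ for $0\le t<T$. For $\lambda>0$, the tail-Pareto rate $L^{(\lambda)}_{tT}$ is defined by $P_{tT}=\left[1+\lambda^{-1}(T-t)L^{(\lambda)}_{tT}\right]^{-\lambda}$, i.e. $L^{(\lambda)}_{tT}=\lambda(T-t)^{-1}(P_{tT}^{-1/\lambda}-1)$. For a family $\{A_x\}_{x\in\mathbb R^+}$ of $\mathcal F_t$-measurable extended-real random variables, $\limsup_{x\to\infty}A_x:=\operatorname{ess\,inf}_{x}\operatorname{ess\,sup}_{y\ge x}A_y$, with essential supremum/infimum taken among $\mathcal F_t$-measurable random variables. The long tail-Pareto rate is $L^{(\lambda)}_{t\infty}=\limsup_{T\to\infty}L^{(\lambda)}_{tT}$.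 *)

From HB Require Import structures.
From mathcomp Require Import all_boot all_order all_algebra.
From mathcomp Require Import all_classical all_reals all_analysis.
From mathcomp Require Import measurable_realfun.
Set Implicit Arguments. Unset Strict Implicit. Unset Printing Implicit Defensive.
Import Order.TTheory GRing.Theory Num.Theory.
Import numFieldNormedType.Exports.
Local Open Scope classical_set_scope.
Local Open Scope ring_scope.

Section Defs.
Context {R : realType} {d : measure_display} {Omega : measurableType d}.
Variable Prob : probability Omega R.

Definition Gmeasurable {d'} {U : measurableType d'} (G : set (set Omega))
  (f : Omega -> U) := forall B : set U, measurable B -> G (f @^-1` B).

Definition filtration (F : R -> set (set Omega)) :=
  [/\ forall t, 0 <= t -> sigma_algebra setT (F t),
      forall t, 0 <= t -> F t `<=` measurable &
      forall s t, 0 <= s -> s <= t -> F s `<=` F t].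

Definition usual_filtration (F : R -> set (set Omega)) :=
  [/\ filtration F,
      forall N, Prob.-negligible N -> F 0 N &
      forall t A, 0 <= t -> (forall s, t < s -> F s A) -> F t A].

Definition adapted (F : R -> set (set Omega)) (X : R -> Omega -> R) :=
  forall t, 0 <= t -> Gmeasurable (F t) (X t).

Definition cadlag (X : R -> Omega -> R) :=
  forall w t, 0 <= t ->
    (X s w @[s --> t^'+] --> X t w) /\ (0 < t -> cvg (X s w @[s --> t^'-])).

Definition is_cond_exp (G : set (set Omega)) (X Y : Omega -> R) :=
  [/\ Gmeasurable G Y, Prob.-integrable setT (EFin \o Y) &
      forall A, G A -> (\int[Prob]_(w in A) (Y w)%:E = \int[Prob]_(w in A) (X w)%:E)%E].

Definition martingale (F : R -> set (set Omega)) (M : R -> Omega -> R) :=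
  [/\ adapted F M,
      forall t, 0 <= t -> Prob.-integrable setT (EFin \o M t) &
      forall s t, 0 <= s -> s <= t -> is_cond_exp (F s) (M t) (M s)].

Definition stopping_time (F : R -> set (set Omega)) (tau : Omega -> \bar R) :=
  (forall w, (0 <= tau w)%E) /\
  (forall t, 0 <= t -> F t [set w | (tau w <= t%:E)%E]).

Definition stopped (X : R -> Omega -> R) (tau : Omega -> \bar R) : R -> Omega -> R :=
  fun t w => X (if (tau w < t%:E)%E then fine (tau w) else t) w.

Definition local_martingale (F : R -> set (set Omega)) (M : R -> Omega -> R) :=
  adapted F M /\ cadlag M /\
  exists tau : nat -> Omega -> \bar R,
    [/\ forall n, stopping_time F (tau n),
        {ae Prob, forall w, {homo (fun n => tau n w) : n m / (n <= m)%N >-> (n <= m)%E}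
                       /\ ((fun n => tau n w) @ \oo --> +oo%E)} &
        forall n, martingale F (stopped M (tau n))].

Definition finite_variation (A : R -> Omega -> R) :=
  forall w t, 0 <= t -> bounded_variation 0 t (fun s => A s w).

Definition semimartingale (F : R -> set (set Omega)) (X : R -> Omega -> R) :=
  adapted F X /\ cadlag X /\
  exists M A : R -> Omega -> R,
    [/\ local_martingale F M, forall w, M 0 w = 0,
        adapted F A /\ cadlag A /\ finite_variation A, forall w, A 0 w = 0 &
        forall t w, 0 <= t -> X t w = X 0 w + M t w + A t w].

Definition pricing_kernel (F : R -> set (set Omega)) (pi : R -> Omega -> R) :=
  [/\ semimartingale F pi,
      forall t, 0 <= t -> {ae Prob, forall w, 0 < pi t w},
      forall t, 0 <= t -> Prob.-integrable setT (EFin \o pi t) &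
      limf_einf (fun t => (\int[Prob]_w (pi t w)%:E)%E) (pinfty_nbhs R) = 0%E].

Definition bond_prices (F : R -> set (set Omega)) (pi : R -> Omega -> R)
  (P : R -> R -> Omega -> R) :=
  forall t T, 0 <= t -> t < T -> is_cond_exp (F t) (pi T) (fun w => pi t w * P t T w).

Definition tail_pareto_rate (lam t T : R) (PtT : R) : R :=
  lam * (T - t)^-1 * (PtT `^ (- lam^-1) - 1).

Definition is_ess_sup {I : Type} (G : set (set Omega)) (S : set I)
  (A : I -> Omega -> \bar R) (Z : Omega -> \bar R) :=
  [/\ Gmeasurable G Z,
      forall i, S i -> {ae Prob, forall w, (A i w <= Z w)%E} &
      forall Z', Gmeasurable G Z' -> (forall i, S i -> {ae Prob, forall w, (A i w <= Z' w)%E}) ->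
        {ae Prob, forall w, (Z w <= Z' w)%E}].

Definition is_ess_inf {I : Type} (G : set (set Omega)) (S : set I)
  (A : I -> Omega -> \bar R) (Z : Omega -> \bar R) :=
  [/\ Gmeasurable G Z,
      forall i, S i -> {ae Prob, forall w, (Z w <= A i w)%E} &
      forall Z', Gmeasurable G Z' -> (forall i, S i -> {ae Prob, forall w, (Z' w <= A i w)%E}) ->
        {ae Prob, forall w, (Z' w <= Z w)%E}].

(** L is limsup_{T -> oo} A_T := ess inf_{x > 0} ess sup_{T >= x, T > t} A_T
    (the family A_T is only defined for T > t) *)
Definition is_ess_limsup (G : set (set Omega)) (t : R) (A : R -> Omega -> \bar R)
  (L : Omega -> \bar R) :=
  exists Sup : R -> Omega -> \bar R,
    (forall x, 0 < x -> is_ess_sup G [set y | x <= y /\ t < y] A (Sup x)) /\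
    is_ess_inf G [set x | 0 < x] Sup L.

Definition long_tail_pareto_rate (F : R -> set (set Omega)) (P : R -> R -> Omega -> R)
  (lam t : R) (L : Omega -> \bar R) :=
  is_ess_limsup (F t) t (fun T w => (tail_pareto_rate lam t T (P t T w))%:E) L.

End Defs.

From HB Require Import structures.
From mathcomp Require Import all_boot all_order all_algebra.
From mathcomp Require Import all_classical all_reals all_analysis.
From mathcomp Require Import measurable_realfun.
From mathcomp Require Import ring lra.
Import Order.TTheory GRing.Theory Num.Theory.
Local Open Scope classical_set_scope.
Local Open Scope ring_scope.

(* For 0 < b < a and s = T - t, the definition of the tail-Pareto rate gives
   P^(-1/a) = (1 + s L^(b) / b)^(b/a), and since b/a < 1 the concavity bound
   x^(b/a) <= K + q x shows that, for T large, L^(a) <= e (1 + max L^(b) 0) for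
   any prescribed e > 0; moreover L^(a) >= -a/s.  Passing to the essential
   limsup in T: wherever L^(b) < oo some essential supremum of the L^(b)_T is
   finite, which forces 0 <= L^(a) <= e (1 + c) for every e, i.e. L^(a) = 0.
   The first claim is the contrapositive of the second. *)

Section RealBounds.
Context {R : realType}.

Lemma le0_ereal_divSn (K : R) (x : \bar R) :
  (forall n : nat, (x <= (K / n.+1%:R)%:E)%E) -> (x <= 0)%E.
Proof.
move=> xK; apply/lee_addgt0Pr => e e0; rewrite add0e.
have n0 : 0 < (Num.truncn (K / e)).+1%:R :> R by rewrite ltr0Sn.
apply: le_trans (xK (Num.truncn (K / e))) _; rewrite lee_fin ler_pdivrMr //.
by rewrite -ler_pdivrMl // mulrC ltW // truncnS_gt.
Qed.

Lemma ge0_ereal_divSn (K : R) (x : \bar R) :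
  (forall n : nat, ((- (K / n.+1%:R))%:E <= x)%E) -> (0 <= x)%E.
Proof.
move=> Kx; rewrite -oppe_le0; apply: (le0_ereal_divSn K) => n.
by rewrite leeNl -EFinN.
Qed.

Lemma powR_le_affine (r q : R) : 0 < r < 1 -> 0 < q ->
  exists K, forall x, 0 <= x -> x `^ r <= K + q * x.
Proof.
move=> /andP[r0 r1] q0.
have r1n : r - 1 != 0 by rewrite subr_eq0 lt_eqF.
pose x0 := q `^ (r - 1)^-1.
have x00 : 0 < x0 by rewrite powR_gt0.
exists (x0 `^ r) => x x_ge0.
have [xx0 | x0x] := leP x x0.
  apply: le_trans (_ : x0 `^ r <= _); last by rewrite lerDl mulr_ge0 // ltW.
  by rewrite ge0_ler_powR ?nnegrE // ?ltW.
have x0' : 0 < x by apply: lt_trans x0x.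
have -> : x `^ r = x `^ (r - 1) * x.
  by rewrite -{3}(powRr1 x_ge0) -powRD ?subrK // lt0r_neq0 ?implybT.
apply: le_trans (_ : q * x <= _); last by rewrite lerDr powR_ge0.
rewrite ler_wpM2r //.
have -> : q = x0 `^ (r - 1) by rewrite -powRrM mulVf // powRr1 // ltW.
rewrite (_ : r - 1 = - (1 - r)); last by ring.
rewrite !powRN lef_pV2 ?posrE ?powR_gt0 //.
by rewrite ge0_ler_powR ?nnegrE ?subr_ge0 ?ltW.
Qed.

Lemma ereal_eq0_le_invSn (x z : \bar R) : (0 <= x)%E -> z != +oo%E ->
  (forall n : nat, (x <= (n.+1%:R^-1)%:E * (maxe z 0 + 1))%E) -> x = 0%E.
Proof.
move=> x0 zoo xz; apply: le_anti; rewrite x0 andbT.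
case: z zoo xz => [c| |] // _ xz.
  apply: (le0_ereal_divSn (Num.max c 0 + 1)) => n.
  by rewrite mulrC EFinM EFinD EFin_max; exact: xz.
apply: (le0_ereal_divSn 1) => n.
by rewrite mul1r; have := xz n; rewrite maxNye add0e mule1.
Qed.

End RealBounds.

Section TailParetoRate.
Context {R : realType}.

Lemma tail_pareto_rate_ge (lam s t T p : R) : 0 < lam -> 0 < s -> s <= T - t ->
  - (lam / s) <= tail_pareto_rate lam t T p.
Proof.
move=> lam0 s0 sT; have sT0 := lt_le_trans s0 sT.
apply: le_trans (_ : - (lam / (T - t)) <= _).
  by rewrite lerN2 ler_pM2l // lef_pV2.
rewrite /tail_pareto_rate -[- _]mulrN1 ler_wpM2l //.
  by rewrite divr_ge0 // ltW.
by rewrite lerBrDr addNr powR_ge0.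
Qed.

Lemma tail_pareto_rate_discount (lam t T p : R) : 0 < lam -> t < T ->
  1 + (T - t) / lam * tail_pareto_rate lam t T p = p `^ (- lam^-1).
Proof.
move=> lam0 tT; rewrite /tail_pareto_rate.
by field; rewrite lt0r_neq0 ?subr_gt0 // lt0r_neq0.
Qed.

Lemma tail_pareto_rate_le_of_lower_order (a b e : R) : 0 < b -> b < a -> 0 < e ->
  exists S, forall t T p c, S <= T - t -> tail_pareto_rate b t T p <= c ->
    tail_pareto_rate a t T p <= e * (Num.max c 0 + 1).
Proof.
move=> b0 ba e0; have a0 : 0 < a := lt_trans b0 ba.
have r01 : 0 < b / a < 1 by rewrite divr_gt0 //= ltr_pdivrMr // mul1r.
have [K HK] := powR_le_affine _ _ r01 (divr_gt0 (mulr_gt0 e0 b0) a0).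
have K0 : 0 <= K.
  have := HK 0 (lexx 0); rewrite powR0 ?mulr0 ?addr0 //.
  by rewrite lt0r_neq0 //; case/andP: r01.
exists ((a * K + e * b) / e) => t T p c Ss Lbc.
have s0 : 0 < T - t.
  apply: (lt_le_trans _ Ss).
  by rewrite divr_gt0 // ltr_wpDl ?mulr_ge0 ?mulr_gt0 // ltW.
set c' := Num.max c 0; set u := p `^ (- b^-1).
have uM : u <= 1 + (T - t) / b * c'.
  rewrite /u -(@tail_pareto_rate_discount b t T p b0); last by rewrite -subr_gt0.
  by rewrite lerD2l ler_wpM2l ?divr_ge0 ?(ltW s0) ?(ltW b0) // le_max Lbc.
have pa : p `^ (- a^-1) = u `^ (b / a).
  by rewrite /u -powRrM; congr (_ `^ _); field; rewrite !lt0r_neq0.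
have c'0 : 0 <= c' by rewrite le_max lexx orbT.
have M0 : 0 <= 1 + (T - t) / b * c'.
  by rewrite addr_ge0 // mulr_ge0 // divr_ge0 // ltW.
have uKM : u `^ (b / a) <= K + e * b / a * (1 + (T - t) / b * c').
  apply: le_trans (HK _ M0).
  by rewrite ge0_ler_powR ?nnegrE ?powR_ge0 ?divr_ge0 ?(ltW a0) ?(ltW b0).
have Se : (a * K + e * b) / (T - t) <= e.
  by rewrite ler_pdivrMr // [e * (T - t)]mulrC -ler_pdivrMr.
have as0 : 0 <= a / (T - t) by rewrite divr_ge0 ?(ltW a0) ?(ltW s0).
rewrite /tail_pareto_rate pa.
have -> : e * (c' + 1) = e + e * c' by ring.
apply: le_trans (_ : a / (T - t) * (K + e * b / a * (1 + (T - t) / b * c') - 1) <= _).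
  by rewrite ler_wpM2l // lerD2r.
have -> : a / (T - t) * (K + e * b / a * (1 + (T - t) / b * c') - 1)
          = (a * K + e * b) / (T - t) + e * c' - a / (T - t).
  by field; rewrite !lt0r_neq0.
lra.
Qed.

Lemma tail_pareto_rate_lee_of_lower_order (a b e : R) : 0 < b -> b < a -> 0 < e ->
  exists S, forall t T p (z : \bar R), S <= T - t ->
    ((tail_pareto_rate b t T p)%:E <= z)%E ->
    ((tail_pareto_rate a t T p)%:E <= e%:E * (maxe z 0 + 1))%E.
Proof.
move=> b0 ba e0; have [S HS] := tail_pareto_rate_le_of_lower_order _ _ _ b0 ba e0.
exists S => t T p [c| |] St.
- by rewrite -EFin_max -EFinD -EFinM !lee_fin => /(HS _ _ _ _ St).
- by move=> _; rewrite maxye addye // gt0_muley ?lte_fin // leey.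
- by rewrite leeNy_eq.
Qed.

End TailParetoRate.

Section Gmeasurable.
Context {d : measure_display} {Omega : measurableType d} {G : set (set Omega)}.
Hypothesis HG : sigma_algebra setT G.

Lemma sigma_algebraT : G setT.
Proof. by case: HG => G0 GC _; rewrite -(setD0 setT); apply: GC. Qed.

Lemma sigma_algebra_bigcapn (A : nat -> set Omega) :
  (forall n, G (A n)) -> G (\bigcap_n A n).
Proof.
move=> GA; case: HG => _ GC GU; rewrite -[X in G X]setCK setC_bigcap -setTD.
by apply: (GC); apply: (GU) => n; rewrite -setTD; apply: (GC).
Qed.

Lemma Gmeasurable_cst {d'} {U : measurableType d'} (z : U) :
  Gmeasurable G (fun _ : Omega => z).
Proof.
move=> B _; have [Bz|Bz] := pselect (B z).
  rewrite (_ : _ @^-1` _ = setT); first exact: sigma_algebraT.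
  by apply/seteqP; split.
by rewrite (_ : _ @^-1` _ = set0); [by case: HG | by apply/seteqP; split].
Qed.

Lemma Gmeasurable_if {d'} {U : measurableType d'} (E : set Omega) (z1 z2 : U) :
  G E -> Gmeasurable G (fun w => if `[< E w >] then z1 else z2).
Proof.
move=> GE B _; have [G0 GC _] := HG.
have [B1|B1] := pselect (B z1); have [B2|B2] := pselect (B z2).
- rewrite (_ : _ @^-1` _ = setT); first exact: sigma_algebraT.
  by apply/seteqP; split=> w /=; case: asboolP => /=; tauto.
- rewrite (_ : _ @^-1` _ = E) //.
  by apply/seteqP; split=> w /=; case: asboolP => /=; tauto.
- rewrite (_ : _ @^-1` _ = setT `\` E); first exact: (GC).
  by apply/seteqP; split=> w /=; case: asboolP => /=; tauto.
- rewrite (_ : _ @^-1` _ = set0) //.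
  by apply/seteqP; split=> w /=; case: asboolP => /=; tauto.
Qed.

Lemma Gmeasurable_comp {d1 d2} {U : measurableType d1} {V : measurableType d2}
  (g : U -> V) (f : Omega -> U) :
  measurable_fun setT g -> Gmeasurable G f -> Gmeasurable G (g \o f).
Proof.
move=> mg mf B mB; apply: (mf (g @^-1` B)).
by rewrite -[_ @^-1` B]setTI; exact: mg measurableT _ mB.
Qed.

End Gmeasurable.

Section EssLimsup.
Context {R : realType} {d : measure_display} {Omega : measurableType d}.
Context {Prob : probability Omega R} {G : set (set Omega)} {t : R}.
Hypothesis HG : sigma_algebra setT G.
Context {A Sup : R -> Omega -> \bar R} {L : Omega -> \bar R}.
Hypothesis HSup :
  forall x, 0 < x -> is_ess_sup Prob G [set y | x <= y /\ t < y] A (Sup x).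
Hypothesis HL : is_ess_inf Prob G [set x | 0 < x] Sup L.

Lemma ess_sup_antitone x y : 0 < x -> x <= y ->
  {ae Prob, forall w, (Sup y w <= Sup x w)%E}.
Proof.
move=> x0 xy; have [_ _ Supy_min] := HSup _ (lt_le_trans x0 xy).
have [Supx_meas Supx_ub _] := HSup _ x0.
by apply: Supy_min => // T [yT tT]; apply: Supx_ub; split => //; apply: le_trans yT.
Qed.

Lemma ess_limsup_ge0 (K : R) :
  (forall (n : nat) T w, t + n.+1%:R <= T -> ((- (K / n.+1%:R))%:E <= A T w)%E) ->
  {ae Prob, forall w, (0 <= L w)%E}.
Proof.
move=> AK; have [_ _ L_max] := HL.
apply: L_max (Gmeasurable_cst HG 0%E) _ => x x0; have [_ Supx_ub _] := HSup _ x0.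
pose T n := Num.max x t + n.+1%:R.
have xtT n : x <= T n /\ t < T n.
  have maxT : Num.max x t < T n by rewrite /T ltrDl ltr0Sn.
  by split; [apply/ltW | ]; apply: le_lt_trans maxT; rewrite le_max lexx ?orbT.
have : {ae Prob, forall w n, (A (T n) w <= Sup x w)%E}.
  by apply: ae_foralln => n; apply: Supx_ub.
apply: filterS => w ASup; apply: (ge0_ereal_divSn K) => n.
by apply: le_trans (ASup n); apply: AK; rewrite lerD2r le_max lexx orbT.
Qed.

Lemma ess_limsup_lt_pinfty :
  {ae Prob, forall w, (L w < +oo)%E -> exists n : nat, Sup n.+1%:R w != +oo%E}.
Proof.
pose E := \bigcap_n Sup n.+1%:R @^-1` [set +oo%E].
have GE : G E.
  apply: sigma_algebra_bigcapn => // n.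
  by have [Supn_meas _ _] := HSup _ (ltr0Sn _ n); apply: Supn_meas.
have [_ _ L_max] := HL.
(* The indicator of E with values +oo/-oo is a G-measurable minorant of every
   Sup x, hence of L. *)
have : {ae Prob, forall w, ((if `[< E w >] then +oo else -oo) <= L w)%E}.
  apply: L_max (Gmeasurable_if HG E +oo%E -oo%E GE) _ => x x0.
  have xn : x <= (Num.truncn x).+1%:R by rewrite ltW // truncnS_gt.
  have := ess_sup_antitone _ _ x0 xn; apply: filterS => w Supxn.
  case: asboolP => Ew; last exact: leNye.
  by move: Supxn; rewrite (Ew (Num.truncn x) I).
apply: filterS => w EL Lw; apply: contrapT => Sup_oo.
have Ew : E w.
  by move=> n _; apply: contrapT => Sn; apply: Sup_oo; exists n; apply/eqP.
by move: EL; rewrite asboolT // leye_eq => /eqP Loo; move: Lw; rewrite Loo ltxx.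
Qed.

Lemma ess_limsup_le_comp (B SupB : R -> Omega -> \bar R) (g : \bar R -> \bar R)
    (x S : R) :
  0 < x -> is_ess_sup Prob G [set y | x <= y /\ t < y] B (SupB x) ->
  measurable_fun setT g ->
  (forall T w z, t + S <= T -> (B T w <= z)%E -> (A T w <= g z)%E) ->
  {ae Prob, forall w, (L w <= g (SupB x w))%E}.
Proof.
move=> x0 [SupB_meas SupB_ub _] mg AB.
pose y := Num.max (t + S) x.
have xy : x <= y by rewrite le_max lexx orbT.
have Sy : t + S <= y by rewrite le_max lexx.
have y0 := lt_le_trans x0 xy.
have [_ L_lb _] := HL; have [_ _ Supy_min] := HSup _ y0.
have : {ae Prob, forall w, (Sup y w <= g (SupB x w))%E}.
  apply: Supy_min (Gmeasurable_comp _ _ mg SupB_meas) _ => T [yT tT].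
  have := SupB_ub T (conj (le_trans xy yT) tT).
  by apply: filterS => w; apply: AB (le_trans Sy yT).
by move: (L_lb _ y0); apply: filterS2 => w; apply: le_trans.
Qed.

End EssLimsup.

Theorem proposition4 (R : realType) (d : measure_display) (Omega : measurableType d)
  (Prob : probability Omega R) (F : R -> set (set Omega)) (pi : R -> Omega -> R)
  (P : R -> R -> Omega -> R) :
  usual_filtration Prob F ->
  pricing_kernel Prob F pi ->
  bond_prices Prob F pi P ->
  forall alpha beta : R, 0 < beta -> beta < alpha ->
  forall t : R, 0 <= t ->
  forall La Lb : Omega -> \bar R,
    long_tail_pareto_rate Prob F P alpha t La ->
    long_tail_pareto_rate Prob F P beta t Lb ->
    {ae Prob, forall w, (0 < La w)%E -> Lb w = +oo%E} /\
    {ae Prob, forall w, (Lb w < +oo)%E -> La w = 0%E}.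
Proof.
move=> [[HF _ _] _ _] _ _ alpha beta b0 ba t t0 La Lb.
move=> [Supa [HSa HLa]] [Supb [HSb HLb]].
have HG := HF t t0; have a0 := lt_trans b0 ba.
have La_ge0 : {ae Prob, forall w, (0 <= La w)%E}.
  apply: (ess_limsup_ge0 HG HSa HLa alpha) => n T w tT.
  by rewrite lee_fin tail_pareto_rate_ge // ?ltr0Sn // lerBrDl.
have Lb_fin := ess_limsup_lt_pinfty HG HSb HLb.
have La_le : {ae Prob, forall w (N n : nat),
    (La w <= (n.+1%:R^-1)%:E * (maxe (Supb N.+1%:R w) 0 + 1))%E}.
  apply: ae_foralln => N; apply: ae_foralln => n.
  have e0 : 0 < n.+1%:R^-1 :> R by rewrite invr_gt0.
  have [S HS] := tail_pareto_rate_lee_of_lower_order _ _ _ b0 ba e0.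
  pose g (z : \bar R) := ((n.+1%:R^-1)%:E * (maxe z 0 + 1))%E.
  apply: (ess_limsup_le_comp HSa HLa _ _ g _ S (ltr0Sn _ N) (HSb _ (ltr0Sn _ N)))
    => [|T w z tST].
    apply: measurable_funeM; apply: emeasurable_funD; last exact: measurable_cst.
    by apply: measurable_maxe; [exact: measurable_id | exact: measurable_cst].
  by apply: HS; lra.
have La0 : {ae Prob, forall w, (Lb w < +oo)%E -> La w = 0%E}.
  move: La_ge0 Lb_fin La_le; apply: filterS3 => w La_w Lb_w La_w_le /Lb_w [N SupN].
  exact: ereal_eq0_le_invSn La_w SupN (La_w_le N).
split=> //; apply: filterS La0 => w La0_w La_pos.
by apply/eqP; rewrite -leye_eq leNgt; apply: contraTN La_pos => /La0_w ->; rewrite ltxx.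
Qed.
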